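(* For all integers $m\ge 2$ and $k\ge 1$, the complete $k$-partite graph $K_{m*k}$ (with $k$ parts, each of size $m$) satisfies \[\mathrm{ch}(K_{m*k})\ \ge\ 2k-\left\lceil\frac{2k-1}{m}\right\rceil\ \ge\ \left\lfloor\frac{2k(m-1)}{m}\right\rfloor .\]
   Context: A list assignment $L$ for a graph $G$ assigns to each vertex $v$ a set $L(v)$ of colors. An $L$-coloring is a proper coloring $f$ of $G$ with $f(v)\in L(v)$ for all $v$. $G$ is $r$-choosable if it has an $L$-coloring for every list assignment $L$ with $|L(v)|\ge r$ for all $v$; the choice number $\mathrm{ch}(G)$ is the least such $r$. $K_{m*k}$ denotes the complete multipartite graph with $k$ parts of size $m$. *)

From mathcomp Require Import all_boot.
Set Implicit Arguments. Unset Strict Implicit. Unset Printing Implicit Defensive.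

Definition list_assignment (V : finType) := V -> seq nat.

Definition is_L_coloring (V : finType) (e : rel V) (L : list_assignment V)
  (f : V -> nat) : Prop :=
  (forall v, f v \in L v) /\ (forall u v, e u v -> f u != f v).

Definition choosable (V : finType) (e : rel V) (r : nat) : Prop :=
  forall L : list_assignment V, (forall v, r <= size (undup (L v))) ->
    exists f, is_L_coloring e L f.

(* Choice number: least r with choosable e r.  Every finite graph is
   #|V|-choosable (greedy), so this minimum exists. *)
Definition ch_ge (V : finType) (e : rel V) (b : nat) : Prop :=
  forall r, choosable e r -> b <= r.

(* K_{m*k}: vertices (i, j) with i the part (k parts), j the index in the part
   (m each); adjacent iff in different parts. *)
Definition Kmk_vertex (m k : nat) := ('I_k * 'I_m)%type.
Definition Kmk (m k : nat) : rel (Kmk_vertex m k) := fun u v => u.1 != v.1.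

Definition ceil_div (a b : nat) : nat := (a + b.-1) %/ b.

From mathcomp Require Import all_boot.
From mathcomp Require Import zify.

(* Put n = 2k-1 and q = ceil(n/m), so that n <= q*m.  Cut the
   palette {0,...,n-1} into consecutive blocks of length q, block j being
   the colours c with c %/ q = j; at most m blocks are nonempty.  Give the
   j-th vertex of every part the list of all colours outside block j; each
   list has at least n - q colours.  In an L-colouring f, the vertex (i,0)
   gets a colour c lying in some block j < m, and the vertex (i,j) cannot
   use c, so every part sees two distinct colours.  Distinct parts are
   completely joined, so f uses 2k distinct colours out of n = 2k-1: a
   contradiction.  Hence K_{m*k} is not (n-q)-choosable, and since
   choosability is monotone in r, ch(K_{m*k}) >= n - q + 1 = 2k - q. *)

Lemma ceil_divP (a b : nat) : 0 < b -> a <= ceil_div a b * b.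
Proof.
move=> b_gt0; rewrite /ceil_div.
have := divn_eq (a + b.-1) b; have := ltn_pmod (a + b.-1) b_gt0; lia.
Qed.

Lemma ceil_div_gt0 (a b : nat) : 0 < a -> 0 < b -> 0 < ceil_div a b.
Proof. by move=> a_gt0 b_gt0; rewrite /ceil_div divn_gt0 //; lia. Qed.

(* floor(N(m-1)/m) = N - ceil(N/m) <= N - ceil((N-1)/m): the second
   inequality of the theorem, for an arbitrary N. *)
Lemma floor_le_sub_ceil (N m : nat) : 0 < m ->
  (N * (m - 1)) %/ m <= N - ceil_div (N - 1) m.
Proof.
move=> m_gt0; rewrite /ceil_div.
set d := (N * (m - 1)) %/ m; set c := (N - 1 + m.-1) %/ m.
have := divn_eq (N * (m - 1)) m; have := ltn_pmod (N * (m - 1)) m_gt0.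
have := divn_eq (N - 1 + m.-1) m; have := ltn_pmod (N - 1 + m.-1) m_gt0.
rewrite -/d -/c => hc1 hc2 hd1 hd2.
have : (d + c) * m < N.+1 * m by nia.
by rewrite ltn_pmul2r //; lia.
Qed.

Lemma choosable_mono (V : finType) (e : rel V) (r s : nat) :
  r <= s -> choosable e r -> choosable e s.
Proof.
by move=> le_rs ch_r L hL; apply: ch_r => v; apply: leq_trans le_rs (hL v).
Qed.

Definition avoid_block (q n j : nat) : seq nat :=
  [seq c <- iota 0 n | c %/ q != j].

Lemma mem_avoid_block (q n j c : nat) :
  (c \in avoid_block q n j) = (c %/ q != j) && (c < n).
Proof. by rewrite mem_filter mem_iota. Qed.

Lemma avoid_block_uniq (q n j : nat) : uniq (avoid_block q n j).
Proof. exact/filter_uniq/iota_uniq. Qed.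

(* A block has at most q colours, so at least n - q colours remain. *)
Lemma size_avoid_block (q n j : nat) :
  0 < q -> n - q <= size (avoid_block q n j).
Proof.
move=> q_gt0.
have block_small : count (fun c => c %/ q == j) (iota 0 n) <= q.
  rewrite -size_filter -[q in _ <= q](size_iota (j * q)).
  apply: uniq_leq_size; first exact/filter_uniq/iota_uniq.
  move=> c; rewrite mem_filter mem_iota => /andP[/eqP <- _].
  rewrite mem_iota; have := divn_eq c q; have := ltn_pmod c q_gt0; lia.
have count_split : count (fun c => c %/ q == j) (iota 0 n) +
    count (fun c => c %/ q != j) (iota 0 n) = size (iota 0 n) :=
  count_predC _ _.
by rewrite size_filter; move: count_split; rewrite size_iota; lia.
Qed.

(* Counting bound: if a proper colouring of K_{m*k} with colours below n
   uses two distinct colours on every part, then 2k <= n, because the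
   pairs (part, which of the two vertices) get pairwise distinct colours. *)
Lemma Kmk_two_colours_per_part (m k n : nat) (f : Kmk_vertex m k -> nat)
    (a b : 'I_k -> 'I_m) :
  (forall u v, Kmk u v -> f u != f v) -> (forall v, f v < n) ->
  (forall i, f (i, a i) != f (i, b i)) -> 2 * k <= n.
Proof.
move=> f_proper f_lt f_two.
pose pick_vertex (x : 'I_k * bool) : Kmk_vertex m k :=
  (x.1, if x.2 then a x.1 else b x.1).
pose g (x : 'I_k * bool) : 'I_n := Ordinal (f_lt (pick_vertex x)).
have g_inj : injective g.
  move=> [i s] [i' s'] /(congr1 val) /= fE.
  have ii' : i = i'.
    apply/eqP; apply: contraTT isT => ne_ii'.
    by have := f_proper (pick_vertex (i, s)) (pick_vertex (i', s')) ne_ii';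
      rewrite fE eqxx.
  subst i'; congr pair; move: fE (f_two i).
  by case: s; case: s' => // ->; rewrite eqxx.
by have := leq_card g g_inj; rewrite card_prod card_ord card_bool card_ord mulnC.
Qed.

Lemma Kmk_not_choosable (m k q n : nat) :
  0 < m -> 0 < q -> n <= q * m -> n < 2 * k -> ~ choosable (@Kmk m k) (n - q).
Proof.
move=> m_gt0 q_gt0 n_le n_lt ch.
pose L (v : Kmk_vertex m k) := avoid_block q n v.2.
have [f [fL f_proper]] : exists f, is_L_coloring (@Kmk m k) L f.
  by apply: ch => v; rewrite undup_id ?avoid_block_uniq ?size_avoid_block.
have fP v : (f v %/ q != v.2) && (f v < n) by rewrite -mem_avoid_block fL.
pose j0 : 'I_m := Ordinal m_gt0.
have block_lt i : f (i, j0) %/ q < m.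
  by rewrite ltn_divLR //; have /andP[_] := fP (i, j0); lia.
pose blk (i : 'I_k) : 'I_m := Ordinal (block_lt i).
apply/negP: n_lt; rewrite -leqNgt.
apply: (@Kmk_two_colours_per_part m k n f blk (fun=> j0) f_proper).
- by move=> v; have /andP[] := fP v.
- move=> i; apply: contraNneq (proj1 (andP (fP (i, blk i)))) => ->.
  by rewrite eqxx.
Qed.

Theorem mainTheorem2 (m k : nat) (hm : 2 <= m) (hk : 1 <= k) :
  ch_ge (@Kmk m k) (2 * k - ceil_div (2 * k - 1) m) /\
  (2 * k * (m - 1)) %/ m <= 2 * k - ceil_div (2 * k - 1) m.
Proof.
have m_gt0 : 0 < m by lia.
split; last exact: floor_le_sub_ceil.
move=> r ch_r; rewrite leqNgt; apply/negP => r_small.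
set q := ceil_div (2 * k - 1) m in r_small.
have q_gt0 : 0 < q by apply: ceil_div_gt0; lia.
have cover := @ceil_divP (2 * k - 1) m m_gt0 : 2 * k - 1 <= q * m.
apply: (@Kmk_not_choosable m k q (2 * k - 1) m_gt0 q_gt0 cover); first lia.
by apply: choosable_mono ch_r; lia.
Qed.
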